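(* Let $(V,E)$ be a finite graph with $E\ne\emptyset$ and $p\in(0,1)$. Let $(\eta_t,\sigma_t)_{t\ge0}$ be a continuous-time Markov jump process on $\mathcal C$ with the following rates: (a) if $\sigma'=\sigma$ and there is $e\in E$ with $\eta'=\eta^e$ and $\gamma_\eta(e)=1$, then $c((\eta,\sigma),(\eta',\sigma'))=\big((1-p)\mathbf 1_{\eta(e)=1}+p\mathbf 1_{\eta(e)=0}\big)\mathbf 1_{(\eta,\sigma)\in\mathcal C}$; (b) if $\sigma'=\sigma$ and there is $e\in E$ with $\eta'=\eta^e$, $\gamma_\eta(e)=0$ and $\delta_\sigma(e)=1$, then $c((\eta,\sigma),(\eta',\sigma'))=\frac12\big((1-p)\mathbf 1_{\eta(e)=1}+p\mathbf 1_{\eta(e)=0}\big)\mathbf 1_{(\eta,\sigma)\in\mathcal C}$; (c) if there are $x\in V$ and $e\in E_x$ with $\eta'=\eta^e$, $\gamma_\eta(e)=0$, $\eta(e)=\delta_\sigma(e)$, and $\sigma'(y)=-\sigma(y)$ for the vertices $y$ connected to $x$ by an open path of $\eta$ not using $e$ (including $y=x$), $\sigma'(y)=\sigma(y)$ otherwise, then $c((\eta,\sigma),(\eta',\sigma'))=\frac14\big((1-p)\mathbf 1_{\eta(e)=1}\mathbf 1_{(\eta,\sigma)\in\mathcal C}+p\mathbf 1_{\eta(e)=0}\mathbf 1_{(\eta',\sigma')\in\mathcal C}\big)$; (d) all other off-diagonal rates are $0$. Then $(\eta_t,\sigma_t)_{t\ge0}$ is reversible with respect to $IP$; its edge marginal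 $(\eta_t)_{t\ge0}$ is a Markov jump process evolving according to the FK dynamics, i.e. with rates $\tilde c(\eta,\eta^e)=1-p$ if $\eta(e)=1$, $p$ if $\eta(e)=0$ and $\gamma_\eta(e)=1$, $p/2$ if $\eta(e)=0$ and $\gamma_\eta(e)=0$ (and $0$ for changes of two or more edges); and its spin marginal $(\sigma_t)_{t\ge0}$ is not a Markov jump process.
   Context: Edge configurations $\eta\in\{0,1\}^E$ (1 = open), spin configurations $\sigma\in\{-1,1\}^V$. For $e=\langle x,y\rangle$, $\delta_\sigma(e)=\mathbf 1_{\sigma(x)=\sigma(y)}$. $\mathcal C=\{(\eta,\sigma):\eta(e)\le\delta_\sigma(e)\ \forall e\in E\}$. $IP(\eta,\sigma)=\frac1Z\prod_{e\in E}\big(p\mathbf 1_{\eta(e)=1}\delta_\sigma(e)+(1-p)\mathbf 1_{\eta(e)=0}\big)$ with $Z$ the normalizing constant. $E_x$ is the set of edges with endvertex $x$; $\eta^e$ is $\eta$ with the value at $e$ changed. For $e=\langle x,y\rangle$, $\gamma_\eta(e)=1$ if $x,y$ are connected by a path of open edges of $\eta$ not using $e$, and $0$ otherwise. Reversibility w.r.t. $IP$ means $IP(a)c(a,b)=IP(b)c(b,a)$ for all states. A marginal process is a Markov jump process if it is a time-homogeneous Markov process for every initial distribution, with transition rates not depending on the initial distribution. *)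

From HB Require Import structures.
From mathcomp Require Import all_boot all_order all_algebra.
From mathcomp Require Import all_classical all_reals all_analysis.
Set Implicit Arguments. Unset Strict Implicit. Unset Printing Implicit Defensive.
Import Order.TTheory GRing.Theory Num.Theory.
Import numFieldNormedType.Exports.
Local Open Scope ring_scope.

Section MarkovJump.
Variable R : realType.

Definition gen (T : finType) (c : T -> T -> R) (a b : T) : R :=
  if a == b then - (\sum_(b' | b' != a) c a b') else c a b.

Fixpoint qpow (T : finType) (Q : T -> T -> R) (k : nat) : T -> T -> R :=
  match k with
  | 0 => fun a b => (a == b)%:R
  | k'.+1 => fun a b => \sum_(c : T) qpow Q k' a c * Q c b
  end.

(* transition function P_t = exp(t Q), entrywise as a power series *)
Definition trans (T : finType) (Q : T -> T -> R) (t : R) (a b : T) : R :=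
  limn (series (fun k : nat => t ^+ k / (k`!)%:R * qpow Q k a b)).

(* probability of visiting the successive states, with time increments,
   for a Markov chain with transition function P started at a *)
Fixpoint pathprob (T : finType) (P : R -> T -> T -> R) (a : T)
  (steps : seq (R * T)) : R :=
  match steps with
  | [::] => 1
  | (s, b) :: rest => P s a b * pathprob P b rest
  end.

Fixpoint mpathprob (T U : finType) (P : R -> T -> T -> R) (f : T -> U) (a : T)
  (steps : seq (R * U)) : R :=
  match steps with
  | [::] => 1
  | (s, y) :: rest => \sum_(b | f b == y) P s a b * mpathprob P f b rest
  end.

Definition is_distribution (T : finType) (mu : T -> R) : Prop :=
  (forall a, 0 <= mu a) /\ \sum_a mu a = 1.

(* The image process (f X_t)_t of the Markov jump process X on T with
   off-diagonal rates c is, for every initial distribution mu of X_0, a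
   time-homogeneous Markov process with off-diagonal rates ct (the same
   for all mu): all finite-dimensional distributions agree. *)
Definition image_is_MJP_with_rates (T U : finType) (c : T -> T -> R) (f : T -> U)
  (ct : U -> U -> R) : Prop :=
  forall mu : T -> R, is_distribution mu ->
  forall (y0 : U) (steps : seq (R * U)), all (fun st => 0 <= st.1) steps ->
    \sum_(a | f a == y0) mu a * mpathprob (trans (gen c)) f a steps
    = (\sum_(a | f a == y0) mu a) * pathprob (trans (gen ct)) y0 steps.

Definition offdiag_rates (U : finType) (ct : U -> U -> R) : Prop :=
  forall y y', y != y' -> 0 <= ct y y'.

Definition image_is_MJP (T U : finType) (c : T -> T -> R) (f : T -> U) : Prop :=
  exists ct : U -> U -> R, offdiag_rates ct /\ image_is_MJP_with_rates c f ct.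

Definition reversible (T : finType) (pi : T -> R) (c : T -> T -> R) : Prop :=
  forall a b, pi a * c a b = pi b * c b a.

End MarkovJump.

(* Spins are booleans (true = +1, false = -1), edges: true = open.         *)
Section ES.
Variables (R : realType) (V E : finType) (src dst : E -> V).

Definition econf := {ffun E -> bool}.
Definition sconf := {ffun V -> bool}.
Definition state := (econf * sconf)%type.

Definition incident (x : V) (e : E) : bool := (src e == x) || (dst e == x).

Definition delta (s : sconf) (e : E) : bool := s (src e) == s (dst e).

Definition inC (a : state) : bool := [forall e, a.1 e ==> delta a.2 e].

Definition flip (eta : econf) (e : E) : econf :=
  [ffun f => if f == e then ~~ eta e else eta f].

Definition open_adj (eta : econf) (e : E) : rel V :=
  fun u v => [exists f, [&& f != e, eta f &
                ((src f == u) && (dst f == v)) || ((src f == v) && (dst f == u))]].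

Definition conn_wo (eta : econf) (e : E) (x y : V) : bool :=
  connect (open_adj eta e) x y.

Definition gamma (eta : econf) (e : E) : bool := conn_wo eta e (src e) (dst e).

Definition cluster_flip (eta : econf) (e : E) (x : V) (s : sconf) : sconf :=
  [ffun y => if conn_wo eta e x y then ~~ s y else s y].

Definition b2r (b : bool) : R := b%:R.

Definition caseA (a a' : state) (e : E) : bool :=
  [&& a'.2 == a.2, a'.1 == flip a.1 e & gamma a.1 e].
Definition caseB (a a' : state) (e : E) : bool :=
  [&& a'.2 == a.2, a'.1 == flip a.1 e, ~~ gamma a.1 e & delta a.2 e].
Definition caseC (a a' : state) (xe : V * E) : bool :=
  [&& incident xe.1 xe.2, a'.1 == flip a.1 xe.2, ~~ gamma a.1 xe.2,
      a.1 xe.2 == delta a.2 xe.2 &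
      a'.2 == cluster_flip a.1 xe.2 xe.1 a.2].

Definition ES_rate (p : R) (a a' : state) : R :=
  match [pick e | caseA a a' e] with
  | Some e => ((1 - p) * b2r (a.1 e) + p * b2r (~~ a.1 e)) * b2r (inC a)
  | None =>
    match [pick e | caseB a a' e] with
    | Some e => 2^-1 * ((1 - p) * b2r (a.1 e) + p * b2r (~~ a.1 e)) * b2r (inC a)
    | None =>
      match [pick xe | caseC a a' xe] with
      | Some xe => 4^-1 * ((1 - p) * b2r (a.1 xe.2) * b2r (inC a)
                          + p * b2r (~~ a.1 xe.2) * b2r (inC a'))
      | None => 0
      end
    end
  end.

Definition Cstate := {a : state | inC a}.

Definition ES_rate_C (p : R) (a b : Cstate) : R := ES_rate p (val a) (val b).

Definition IPweight (p : R) (a : state) : R :=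
  \prod_(e : E) (p * b2r (a.1 e) * b2r (delta a.2 e) + (1 - p) * b2r (~~ a.1 e)).
Definition IPZ (p : R) : R := \sum_(a : state) IPweight p a.
Definition IP (p : R) (a : state) : R := IPweight p a / IPZ p.

Definition FK_rate (p : R) (eta eta' : econf) : R :=
  match [pick e | eta' == flip eta e] with
  | Some e => if eta e then 1 - p
              else if gamma eta e then p else p / 2
  | None => 0
  end.

Definition edge_marg (a : Cstate) : econf := (val a).1.
Definition spin_marg (a : Cstate) : sconf := (val a).2.

End ES.

From HB Require Import structures.
From mathcomp Require Import all_boot all_order all_algebra.
From mathcomp Require Import all_classical all_reals all_analysis.
From mathcomp Require Import ring lra.
Import Order.TTheory GRing.Theory Num.Theory.
Import numFieldNormedType.Exports.
Local Open Scope ring_scope.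
Set Implicit Arguments. Unset Strict Implicit. Unset Printing Implicit Defensive.

(* A transition of the coupled chain changes one edge e, and possibly flips the
   spins of the cluster of an endpoint of e in the open graph without e; such a
   flip leaves delta unchanged on every other open edge. Detailed balance with
   respect to IP therefore reduces to the factor of e, where weight and rate
   multiply to p (1 - p) in both directions.

   Summing the rates out of (eta, sigma) over all spin configurations compatible
   with a given eta' gives the FK rate, whatever sigma is. By Dynkin's
   lumpability criterion, the generator, its powers, exp (t Q) and all
   finite-dimensional distributions then project onto those of the FK dynamics.

   The all-closed and the single-open-edge configurations with all spins + have
   the same spin image, but only the second one can flip the spin of one
   endpoint of the open edge (at rate (1 - p) / 4). The probabilities of seeing
   that spin configuration at time t thus differ by (1 - p) t / 4 + O(t^2),
   which no Markov process on spins allows. *)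

(** * Matrix exponential *)

Section ExpSeriesNearZero.
Local Open Scope classical_set_scope.
Variables (R : realType) (D : nat -> R) (K M : R).
Hypotheses (M_ge0 : 0 <= M) (D0 : D 0 = 0) (D_le : forall k, `|D k| <= K * M ^+ k).

Lemma cvg_series_single (i : nat) (x : R) :
  series (fun k => (k == i)%:R * x) @ \oo --> x.
Proof.
apply: cvg_near_cst; exists i.+1 => // n /= lt_in.
rewrite /series /= big_mkord (bigD1 (Ordinal lt_in)) //= eqxx mul1r.
by rewrite big1 ?addr0 // => k; rewrite -val_eqE /= => /negPf ->; rewrite mul0r.
Qed.

Let S t := limn (series (fun k : nat => t ^+ k / k`!%:R * D k)).

Let K_ge0 : 0 <= K.
Proof. by have := D_le 0; rewrite expr0 mulr1; apply: le_trans. Qed.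

Lemma exp_series_term_le t k : 0 <= t <= 1 ->
  `|t ^+ k / k`!%:R * D k - (k == 1)%:R * (t * D 1)| <= t ^+ 2 * K * exp_coeff M k.
Proof.
move=> /andP[t_ge0 t_le1].
have rhs_ge0 : 0 <= t ^+ 2 * K * exp_coeff M k.
  by rewrite !mulr_ge0 ?exprn_ge0 ?exp_coeff_ge0.
case: k => [|[|k]] in rhs_ge0 *; first by rewrite D0 mulr0 mul0r subr0 normr0.
  by rewrite expr1 divr1 mul1r subrr normr0.
have -> : exp_coeff M k.+2 = M ^+ k.+2 / (k.+2)`!%:R by [].
rewrite mul0r subr0 normrM normrM normfV normrX (ger0_norm t_ge0) [`|_`!%:R|]ger0_norm //.
have -> : t ^+ k.+2 = t ^+ 2 * t ^+ k by rewrite -exprD.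
have -> : t ^+ 2 * t ^+ k / (k.+2)`!%:R * `|D k.+2| =
    t ^+ 2 / (k.+2)`!%:R * (t ^+ k * `|D k.+2|) by ring.
have -> : t ^+ 2 * K * (M ^+ k.+2 / (k.+2)`!%:R) =
    t ^+ 2 / (k.+2)`!%:R * (1 * (K * M ^+ k.+2)) by ring.
rewrite ler_wpM2l ?mulr_ge0 ?exprn_ge0 ?invr_ge0 // ler_pM ?exprn_ge0 //.
exact: exprn_ile1.
Qed.

Lemma exp_series_linear_approx t : 0 <= t <= 1 ->
  `|S t - t * D 1| <= t ^+ 2 * (K * limn (series (exp_coeff M))).
Proof.
move=> t01.
set u := fun k : nat => t ^+ k / k`!%:R * D k.
set w := fun k : nat => (k == 1)%:R * (t * D 1).
set v := fun k : nat => u k - w k.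
have cvg_exp := is_cvg_series_exp_coeff M.
have cvg_norm_v : cvgn [normed series v].
  apply: (@series_le_cvg _ _ (t ^+ 2 * K *: exp_coeff M)) => [n|n|n|].
  - exact: normr_ge0.
  - by rewrite /= !mulr_ge0 ?exprn_ge0 ?exp_coeff_ge0 //; case/andP: t01.
  - exact: exp_series_term_le.
  - exact: is_cvg_seriesZ.
have cvg_w := @cvg_series_single 1 (t * D 1).
rewrite /S -/u.
have -> : u = v + w by apply/funext => k; rewrite /v /= subrK.
rewrite lim_seriesD ?(normed_cvg cvg_norm_v) //; last exact: cvgP cvg_w.
rewrite (cvg_lim (@Rhausdorff R) cvg_w) addrK.
apply: (le_trans (lim_series_norm cvg_norm_v)).
have -> : t ^+ 2 * (K * limn (series (exp_coeff M))) =
    limn (series (t ^+ 2 * K *: exp_coeff M)) by rewrite lim_seriesZ // mulrA.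
apply: lim_series_le => //.
- exact: is_cvg_seriesZ.
- move=> n; exact: exp_series_term_le.
- exact: normed_cvg.
Qed.

Lemma exp_series_gt0_near0 : 0 < D 1 -> exists2 t, 0 <= t & 0 < S t.
Proof.
move=> D1_gt0; set C := K * limn (series (exp_coeff M)).
have C_ge0 : 0 <= C.
  have := exp_series_linear_approx (t := 1); rewrite ler01 lexx expr1n !mul1r.
  by move=> /(_ isT); apply: le_trans (normr_ge0 _).
pose t := D 1 / (2 * (C + 1) + D 1).
have den_gt0 : 0 < 2 * (C + 1) + D 1 by lra.
have t_gt0 : 0 < t by rewrite divr_gt0.
have t_den : t * (2 * (C + 1) + D 1) = D 1 by rewrite mulfVK // gt_eqF.
have t_le1 : t <= 1 by rewrite ler_pdivrMr // mul1r; lra.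
exists t; first exact: ltW.
have := exp_series_linear_approx (t := t); rewrite (ltW t_gt0) t_le1.
move=> /(_ isT); rewrite ler_norml -/C => /andP[approx _].
(* The choice of t gives 2 t C < D 1, hence S t >= t (D 1 - t C) > 0. *)
have tC_lt : t * C < D 1 by nra.
nra.
Qed.

End ExpSeriesNearZero.

Section MatrixExponential.
Local Open Scope classical_set_scope.
Variables (R : realType) (T : finType) (Q : T -> T -> R).

Let M := \sum_c \sum_d `|Q c d|.

Let M_ge0 : 0 <= M.
Proof. by rewrite sumr_ge0 // => c _; rewrite sumr_ge0. Qed.

Lemma qpow1 a b : qpow Q 1 a b = Q a b.
Proof.
rewrite /= (bigD1 a) //= eqxx mul1r big1 ?addr0 // => c.
by rewrite eq_sym => /negPf ->; rewrite mul0r.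
Qed.

Lemma qpow_norm_le k a b : `|qpow Q k a b| <= M ^+ k.
Proof.
elim: k b => [|k IH] b /=; first by rewrite expr0; case: (a == b); rewrite ?normr1 ?normr0.
apply: (le_trans (ler_norm_sum _ _ _)).
apply: (@le_trans _ _ (\sum_c M ^+ k * `|Q c b|)).
  by apply: ler_sum => c _; rewrite normrM ler_wpM2r.
rewrite exprSr -mulr_sumr ler_wpM2l ?exprn_ge0 //.
by apply: ler_sum => c _; rewrite (bigD1 b) //= lerDl sumr_ge0.
Qed.

Lemma sum_qpow_norm_le k a (P : pred T) :
  `|\sum_(b | P b) qpow Q k a b| <= #|T|%:R * M ^+ k.
Proof.
apply: (le_trans (ler_norm_sum _ _ _)).
apply: (@le_trans _ _ (\sum_(b : T) M ^+ k)); last by rewrite sumr_const mulr_natl.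
rewrite [leRHS](bigID P) /= -[leLHS]addr0 lerD ?sumr_ge0 ?exprn_ge0 //.
by apply: ler_sum => b _; exact: qpow_norm_le.
Qed.

Lemma is_cvg_trans_series t a b :
  cvgn (series (fun k : nat => t ^+ k / k`!%:R * qpow Q k a b)).
Proof.
apply: normed_cvg; apply: (@series_le_cvg _ _ (exp_coeff (`|t| * M))).
- by move=> n; rewrite normr_ge0.
- by move=> n; rewrite exp_coeff_ge0 // mulr_ge0.
- move=> n; rewrite /exp_coeff /= !normrM normfV normrX exprMn.
  rewrite [`|n`!%:R|]ger0_norm // mulrAC ler_wpM2r ?invr_ge0 //.
  by rewrite ler_wpM2l ?exprn_ge0 // qpow_norm_le.
- exact: is_cvg_series_exp_coeff.
Qed.

Lemma cvg_sum_trans t a (P : pred T) :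
  series (fun k : nat => t ^+ k / k`!%:R * \sum_(b | P b) qpow Q k a b) @ \oo -->
  \sum_(b | P b) trans Q t a b.
Proof.
have -> : series (fun k : nat => t ^+ k / k`!%:R * \sum_(b | P b) qpow Q k a b) =
    fun n => \sum_(b | P b) series (fun k : nat => t ^+ k / k`!%:R * qpow Q k a b) n.
  apply/funext => n; rewrite /series /= exchange_big /=.
  by apply: eq_bigr => k _; rewrite mulr_sumr.
apply: cvg_big => [|b _]; first exact: add_continuous.
exact: is_cvg_trans_series.
Qed.

Lemma trans_fiber_lt a1 a2 (P : pred T) : ~~ P a1 -> ~~ P a2 ->
  \sum_(b | P b) Q a1 b < \sum_(b | P b) Q a2 b ->
  exists2 t, 0 <= t & \sum_(b | P b) trans Q t a1 b < \sum_(b | P b) trans Q t a2 b.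
Proof.
move=> Pa1 Pa2 lt_rate.
pose D k := \sum_(b | P b) qpow Q k a2 b - \sum_(b | P b) qpow Q k a1 b.
have qpow0_fiber a : ~~ P a -> \sum_(b | P b) qpow Q 0 a b = 0.
  by move=> Pa; rewrite big1 // => b Pb /=; case: eqP Pb => // <-; rewrite (negPf Pa).
have D0 : D 0 = 0 by rewrite /D !qpow0_fiber ?subrr.
have D1 : 0 < D 1.
  rewrite /D subr_gt0; under eq_bigr do rewrite qpow1.
  by under [X in _ < X]eq_bigr do rewrite qpow1.
have D_le k : `|D k| <= (#|T|%:R + #|T|%:R) * M ^+ k.
  by rewrite mulrDl; apply: (le_trans (ler_normB _ _)); rewrite lerD ?sum_qpow_norm_le.
have [t t_ge0 S_gt0] := exp_series_gt0_near0 M_ge0 D0 D_le D1.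
exists t => //; rewrite -subr_gt0.
rewrite -(cvg_lim (@Rhausdorff R) (cvgB (@cvg_sum_trans t a2 P) (@cvg_sum_trans t a1 P))).
rewrite -seriesN -seriesD (_ : _ + _ = fun k => t ^+ k / k`!%:R * D k) //.
by apply/funext => k; rewrite /= mulrBr.
Qed.

End MatrixExponential.

(** * Dynkin's lumpability criterion *)

Section Lumpability.
Variables (R : realType) (T U : finType) (c : T -> T -> R) (f : T -> U)
  (ct : U -> U -> R).
Hypothesis sum_rate_fiber :
  forall a y, y != f a -> \sum_(b | f b == y) c a b = ct (f a) y.
Hypothesis rate_fiber_eq0 : forall a b, b != a -> f b == f a -> c a b = 0.

Lemma sum_gen_fiber a y : \sum_(b | f b == y) gen c a b = gen ct (f a) y.
Proof.
rewrite /gen; have [->|ya] := eqVneq y (f a); last first.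
  rewrite -sum_rate_fiber //; apply: eq_bigr => b /eqP fb.
  by case: eqP => // ab; move: ya; rewrite -fb ab eqxx.
rewrite (bigD1 a) //= eqxx [X in _ + X]big1 ?addr0; last first.
  by move=> b /andP[fb ba]; rewrite eq_sym (negPf ba) (rate_fiber_eq0 ba fb).
congr (- _); rewrite (bigID (fun b => f b == f a)) /= big1 ?add0r; last first.
  by move=> b /andP[ba fb]; rewrite rate_fiber_eq0 // eq_sym.
rewrite (partition_big f (fun y => y != f a)) /=; last by move=> b /andP[].
apply: eq_bigr => z za; rewrite -sum_rate_fiber //; apply: eq_bigl => b.
case: (eqVneq (f b) z) => [fbz|]; rewrite ?andbF // fbz za !andbT.
by apply: contra_neq za => ba; rewrite -fbz ba.
Qed.

Lemma sum_qpow_fiber k a y :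
  \sum_(b | f b == y) qpow (gen c) k a b = qpow (gen ct) k (f a) y.
Proof.
elim: k a y => [|k IH] a y /=.
  have [<-|ya] := eqVneq (f a) y.
    by rewrite (bigD1 a) //= eqxx big1 ?addr0 // => b /andP[_ /negPf]; rewrite eq_sym => ->.
  rewrite big1 // => b /eqP fb; case: eqP => // ab.
  by move: ya; rewrite ab fb eqxx.
rewrite exchange_big /=; under eq_bigr do rewrite -mulr_sumr sum_gen_fiber.
rewrite (partition_big f predT) //=; apply: eq_bigr => z _.
by rewrite -IH mulr_suml; apply: eq_bigr => b /eqP ->.
Qed.

Lemma sum_trans_fiber t a y :
  \sum_(b | f b == y) trans (gen c) t a b = trans (gen ct) t (f a) y.
Proof.
rewrite -(cvg_lim (@Rhausdorff R) (@cvg_sum_trans R T (gen c) t a (fun b => f b == y))).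
by congr (limn (series _)); apply/funext => k; rewrite sum_qpow_fiber.
Qed.

Lemma mpathprob_lumped a steps :
  mpathprob (trans (gen c)) f a steps = pathprob (trans (gen ct)) (f a) steps.
Proof.
elim: steps a => [|[s y] steps IH] a //=.
under eq_bigr => b /eqP fb do rewrite IH fb.
by rewrite -mulr_suml sum_trans_fiber.
Qed.

Lemma lumpable_image_is_MJP : image_is_MJP_with_rates c f ct.
Proof.
move=> mu _ y0 steps _; rewrite mulr_suml.
by apply: eq_bigr => a /eqP fa; rewrite mpathprob_lumped fa.
Qed.

End Lumpability.

Lemma image_MJP_fiber_trans (R : realType) (T U : finType) (c : T -> T -> R)
    (f : T -> U) (ct : U -> U -> R) :
  image_is_MJP_with_rates c f ct -> forall a y t, 0 <= t ->
  \sum_(b | f b == y) trans (gen c) t a b = trans (gen ct) t (f a) y.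
Proof.
move=> MJP a y t t_ge0; pose mu (a' : T) : R := (a' == a)%:R.
have mu_at_a F : \sum_(a' | f a' == f a) mu a' * F a' = F a.
  rewrite (bigD1 a) //= /mu eqxx mul1r big1 ?addr0 // => a' /andP[_ /negPf ->].
  exact: mul0r.
have mu_distr : is_distribution mu.
  split=> [a'|]; first exact: ler0n.
  by rewrite (bigD1 a) //= /mu eqxx big1 ?addr0 // => a' /negPf ->.
have := MJP mu mu_distr (f a) [:: (t, y)]; rewrite /= t_ge0 => /(_ isT).
rewrite mu_at_a (_ : \sum_(a' | _) mu a' = 1); last first.
  by rewrite -[RHS](mu_at_a (fun=> 1)); apply: eq_bigr => a' _; rewrite mulr1.
by rewrite mul1r mulr1; under eq_bigr do rewrite mulr1.
Qed.

Lemma not_image_MJP_fiber_rates (R : realType) (T U : finType) (c : T -> T -> R)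
    (f : T -> U) (a1 a2 : T) (y : U) :
  f a1 = f a2 -> y != f a1 ->
  \sum_(b | f b == y) c a1 b < \sum_(b | f b == y) c a2 b -> ~ image_is_MJP c f.
Proof.
move=> fa12 ya1 lt_rate [ct [_ MJP]].
have gen_fiber a : y != f a ->
    \sum_(b | f b == y) gen c a b = \sum_(b | f b == y) c a b.
  move=> ya; apply: eq_bigr => b /eqP fb; rewrite /gen.
  by case: eqP => // ab; rewrite ab fb eqxx in ya.
have ya2 : y != f a2 by rewrite -fa12.
have [|||t t_ge0] := @trans_fiber_lt R T (gen c) a1 a2 (fun b => f b == y).
- by rewrite eq_sym.
- by rewrite eq_sym.
- by rewrite !gen_fiber.
by rewrite !(image_MJP_fiber_trans MJP) // fa12 ltxx.
Qed.

(** * Edge flips and cluster flips *)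

Section FlipCluster.
Variables (V E : finType) (src dst : E -> V).
Implicit Types (eta : econf E) (s : sconf V) (a b : state V E).

Lemma flip_self eta e : flip eta e e = ~~ eta e.
Proof. by rewrite ffunE eqxx. Qed.

Lemma flip_other eta e f : f != e -> flip eta e f = eta f.
Proof. by move=> fe; rewrite ffunE (negPf fe). Qed.

Lemma flipK eta e : flip (flip eta e) e = eta.
Proof.
apply/ffunP => f; have [->|fe] := eqVneq f e; first by rewrite !flip_self negbK.
by rewrite !flip_other.
Qed.

Lemma flip_inj eta : injective (flip eta).
Proof.
move=> e e' same; apply/eqP; apply: contraT => ee'.
have := congr1 (fun g : econf E => g e) same.
by rewrite /= flip_self flip_other //; case: (eta e).
Qed.

Lemma flip_neq eta e : flip eta e != eta.
Proof.
apply/negP => /eqP /(congr1 (fun g : econf E => g e)).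
by rewrite /= flip_self; case: (eta e).
Qed.

Lemma open_adj_sym eta e : symmetric (open_adj src dst eta e).
Proof. by move=> u v; apply/existsP/existsP => -[f]; exists f; rewrite orbC. Qed.

Lemma conn_wo_refl eta e x : conn_wo src dst eta e x x.
Proof. exact: connect0. Qed.

Lemma conn_wo_sym eta e x y : conn_wo src dst eta e x y = conn_wo src dst eta e y x.
Proof. exact/sym_connect_sym/open_adj_sym. Qed.

Lemma conn_wo_flip eta e : conn_wo src dst (flip eta e) e =2 conn_wo src dst eta e.
Proof.
apply: eq_connect => u v; apply/existsP/existsP => -[f /and3P[fe open uv]];
by exists f; rewrite fe uv andbT; rewrite flip_other in open *.
Qed.

Lemma gamma_flip eta e : gamma src dst (flip eta e) e = gamma src dst eta e.
Proof. exact: conn_wo_flip. Qed.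

Lemma conn_wo_spin eta s e u v :
  inC src dst (eta, s) -> conn_wo src dst eta e u v -> s u = s v.
Proof.
move=> /forallP inCs /connectP[q pth ->] {v}.
elim: q u pth => //= w q IH u /andP[/existsP[f /and3P[_ open uw]] pth].
rewrite -(IH w pth); have /eqP := implyP (inCs f) open.
by case/orP: uw => /andP[/eqP -> /eqP ->].
Qed.

Lemma gamma_delta eta s e :
  inC src dst (eta, s) -> gamma src dst eta e -> delta src dst s e.
Proof. by move=> inCs /(conn_wo_spin inCs) same; rewrite /delta same. Qed.

Lemma cluster_flipE eta e x s y :
  cluster_flip src dst eta e x s y = if conn_wo src dst eta e x y then ~~ s y else s y.
Proof. exact: ffunE. Qed.

Lemma cluster_flip_neq eta e x s : cluster_flip src dst eta e x s != s.
Proof.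
apply/negP => /eqP /(congr1 (fun g : sconf V => g x)).
by rewrite /= cluster_flipE conn_wo_refl; case: (s x).
Qed.

Lemma cluster_flipK eta e x s :
  cluster_flip src dst eta e x (cluster_flip src dst eta e x s) = s.
Proof. by apply/ffunP => y; rewrite !cluster_flipE; case: conn_wo; rewrite ?negbK. Qed.

Lemma cluster_flip_flip eta e x s :
  cluster_flip src dst (flip eta e) e x s = cluster_flip src dst eta e x s.
Proof. by apply/ffunP => y; rewrite !cluster_flipE conn_wo_flip. Qed.

Lemma incidentP x e : reflect (x = src e \/ x = dst e) (incident src dst x e).
Proof. by rewrite /incident ![_ == x]eq_sym; apply: (iffP orP) => -[] /eqP; auto. Qed.

Lemma incident_src e : incident src dst (src e) e.
Proof. by rewrite /incident eqxx. Qed.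

Lemma incident_dst e : incident src dst (dst e) e.
Proof. by rewrite /incident eqxx orbT. Qed.

Lemma cluster_flip_endpoints eta e s : ~~ gamma src dst eta e ->
  cluster_flip src dst eta e (src e) s != cluster_flip src dst eta e (dst e) s.
Proof.
rewrite /gamma => /negPf bridge.
apply/negP => /eqP /(congr1 (fun g : sconf V => g (src e))).
by rewrite /= !cluster_flipE conn_wo_refl conn_wo_sym bridge; case: (s (src e)).
Qed.

Lemma delta_cluster_flip_open eta e x s f : eta f -> f != e ->
  delta src dst (cluster_flip src dst eta e x s) f = delta src dst s f.
Proof.
move=> open fe; have adj : open_adj src dst eta e (src f) (dst f).
  by apply/existsP; exists f; rewrite fe open !eqxx.
rewrite /delta !cluster_flipE.
have -> : conn_wo src dst eta e x (dst f) = conn_wo src dst eta e x (src f).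
  apply/idP/idP => conn; apply: connect_trans conn (connect1 _) => //.
  by rewrite open_adj_sym.
by case: conn_wo; case: (s (src f)); case: (s (dst f)).
Qed.

Lemma delta_cluster_flip_edge eta e x s :
  incident src dst x e -> ~~ gamma src dst eta e ->
  delta src dst (cluster_flip src dst eta e x s) e = ~~ delta src dst s e.
Proof.
move=> xe; rewrite /gamma => /negPf bridge.
have bridge' := bridge; rewrite conn_wo_sym in bridge'.
case/incidentP: xe => ->; rewrite /delta !cluster_flipE conn_wo_refl ?bridge ?bridge';
by case: (s (src e)); case: (s (dst e)).
Qed.

Lemma inC_flip eta s e :
  inC src dst (eta, s) -> delta src dst s e -> inC src dst (flip eta e, s).
Proof.
move=> /forallP inCs de; apply/forallP => f /=.
by have [->|fe] := eqVneq f e; rewrite ?de ?implybT // flip_other //; apply: inCs.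
Qed.

Lemma inC_cluster_flip eta s e x :
  inC src dst (eta, s) -> incident src dst x e -> ~~ gamma src dst eta e ->
  eta e = delta src dst s e ->
  inC src dst (flip eta e, cluster_flip src dst eta e x s).
Proof.
move=> /forallP inCs xe bridge ed; apply/forallP => f /=.
have [->|fe] := eqVneq f e.
  by rewrite flip_self delta_cluster_flip_edge // ed implybb.
rewrite flip_other //; case open: (eta f) => //=.
by rewrite delta_cluster_flip_open //; have := inCs f; rewrite /= open.
Qed.

Lemma caseA_sym a b e : caseA src dst a b e -> caseA src dst b a e.
Proof.
case/and3P => /eqP s_ab /eqP eta_ab g.
by rewrite /caseA s_ab eta_ab flipK gamma_flip g !eqxx.
Qed.

Lemma caseB_sym a b e : caseB src dst a b e -> caseB src dst b a e.
Proof.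
case/and4P => /eqP s_ab /eqP eta_ab g d.
by rewrite /caseB s_ab eta_ab flipK gamma_flip g d !eqxx.
Qed.

Lemma caseC_sym a b x e : caseC src dst a b (x, e) -> caseC src dst b a (x, e).
Proof.
case/and5P => /= xe /eqP eta_ab bridge /eqP ed /eqP s_ab.
rewrite /caseC /= eta_ab s_ab flipK gamma_flip flip_self delta_cluster_flip_edge //.
by rewrite cluster_flip_flip cluster_flipK ed xe bridge !eqxx.
Qed.

End FlipCluster.

(** * Reversibility *)

Section Rates.
Variables (R : realType) (V E : finType) (src dst : E -> V) (p : R).
Implicit Types (a b : state V E).

Definition edge_rate (x : bool) : R := (1 - p) * b2r R x + p * b2r R (~~ x).

Lemma ES_rateA a b e : caseA src dst a b e ->
  ES_rate src dst p a b = edge_rate (a.1 e) * b2r R (inC src dst a).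
Proof.
move=> A; rewrite /ES_rate; case: pickP => [e' A'|/(_ e)]; last by rewrite A.
by case/and3P: A => _ /eqP + _; case/and3P: A' => _ /eqP -> _ => /flip_inj ->.
Qed.

Lemma ES_rateB a b e : caseB src dst a b e ->
  ES_rate src dst p a b = 2^-1 * edge_rate (a.1 e) * b2r R (inC src dst a).
Proof.
move=> B; rewrite /ES_rate; case: pickP => [e' A|_].
  case/and4P: B => _ /eqP + bridge _; case/and3P: A => _ /eqP -> g.
  by move=> /flip_inj ee'; rewrite -ee' g in bridge.
case: pickP => [e' B'|/(_ e)]; last by rewrite B.
by case/and4P: B => _ /eqP + _ _; case/and4P: B' => _ /eqP -> _ _ => /flip_inj ->.
Qed.

Lemma ES_rateC a b x e : caseC src dst a b (x, e) ->
  ES_rate src dst p a b = 4^-1 * ((1 - p) * b2r R (a.1 e) * b2r R (inC src dst a)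
                                  + p * b2r R (~~ a.1 e) * b2r R (inC src dst b)).
Proof.
move=> C; have spin_ab : b.2 != a.2.
  by case/and5P: C => _ _ _ _ /eqP ->; apply: cluster_flip_neq.
rewrite /ES_rate; case: pickP => [e' /and3P[/eqP s_ab _ _]|_].
  by rewrite s_ab eqxx in spin_ab.
case: pickP => [e' /and4P[/eqP s_ab _ _ _]|_]; first by rewrite s_ab eqxx in spin_ab.
case: pickP => [[x' e'] C'|/(_ (x, e))]; last by rewrite C.
case/and5P: C => _ /eqP eta_ab _ _ _.
by case/and5P: C' => _ /eqP; rewrite eta_ab => /flip_inj /= ->.
Qed.

Lemma ES_rate_eq0 a b :
  (forall e, ~~ caseA src dst a b e) -> (forall e, ~~ caseB src dst a b e) ->
  (forall xe, ~~ caseC src dst a b xe) -> ES_rate src dst p a b = 0.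
Proof.
move=> nA nB nC; rewrite /ES_rate.
case: pickP => [e A|_]; first by have := nA e; rewrite A.
case: pickP => [e B|_]; first by have := nB e; rewrite B.
by case: pickP => [xe C|_] //; have := nC xe; rewrite C.
Qed.

Hypotheses (p_gt0 : 0 < p) (p_lt1 : p < 1).

Lemma b2r_ge0 x : 0 <= b2r R x.
Proof. by case: x. Qed.

Lemma edge_rate_ge0 x : 0 <= edge_rate x.
Proof. by rewrite addr_ge0 ?mulr_ge0 ?b2r_ge0 ?subr_ge0 ?ltW. Qed.

Lemma ES_rate_ge0 a b : 0 <= ES_rate src dst p a b.
Proof.
have half_ge0 n : 0 <= n.+1%:R^-1 :> R by rewrite invr_ge0.
rewrite /ES_rate; case: pickP => [e _|_].
  by rewrite mulr_ge0 ?edge_rate_ge0 ?b2r_ge0.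
case: pickP => [e _|_]; first by rewrite !mulr_ge0 ?edge_rate_ge0 ?b2r_ge0 ?half_ge0.
case: pickP => [e _|_] //.
by rewrite mulr_ge0 ?half_ge0 // addr_ge0 ?mulr_ge0 ?b2r_ge0 ?subr_ge0 ?ltW.
Qed.

Definition IPfactor (x d : bool) : R := p * b2r R x * b2r R d + (1 - p) * b2r R (~~ x).

Lemma IPweight_split a e : IPweight src dst p a =
  IPfactor (a.1 e) (delta src dst a.2 e) *
  \prod_(f | f != e) IPfactor (a.1 f) (delta src dst a.2 f).
Proof. exact: bigD1. Qed.

(* An allowed edge state is weighted by p or 1 - p, and is left at rate 1 - p or p. *)
Lemma IPfactor_edge_rate x d : (x ==> d) -> IPfactor x d * edge_rate x = p * (1 - p).
Proof. by case: x; case: d => //= _; rewrite /IPfactor /edge_rate /b2r /=; ring. Qed.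

Lemma detailed_balance_at_edge a b e (k : R) :
  inC src dst a -> inC src dst b -> b.1 e = ~~ a.1 e ->
  (forall f, f != e -> IPfactor (b.1 f) (delta src dst b.2 f) =
                       IPfactor (a.1 f) (delta src dst a.2 f)) ->
  ES_rate src dst p a b = k * edge_rate (a.1 e) ->
  ES_rate src dst p b a = k * edge_rate (b.1 e) ->
  IPweight src dst p a * ES_rate src dst p a b =
  IPweight src dst p b * ES_rate src dst p b a.
Proof.
move=> /forallP inCa /forallP inCb flip_e same_rest -> ->.
rewrite !(IPweight_split _ e) (eq_bigr _ same_rest).
set W := \prod_(f | _) _.
have Fa := IPfactor_edge_rate (inCa e); have Fb := IPfactor_edge_rate (inCb e).
transitivity (W * k * (p * (1 - p))); first by rewrite -Fa; ring.
by rewrite -Fb; ring.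
Qed.

Lemma IPweight_detailed_balance a b : inC src dst a -> inC src dst b ->
  IPweight src dst p a * ES_rate src dst p a b =
  IPweight src dst p b * ES_rate src dst p b a.
Proof.
move=> inCa inCb.
have [e A|nA] := pickP (caseA src dst a b).
  apply: (detailed_balance_at_edge (e := e) (k := 1) inCa inCb).
  - by case/and3P: A => _ /eqP -> _; rewrite flip_self.
  - by case/and3P: A => /eqP -> /eqP -> _ f fe; rewrite flip_other.
  - by rewrite (ES_rateA A) inCa mul1r mulr1.
  - by rewrite (ES_rateA (caseA_sym A)) inCb mul1r mulr1.
have [e B|nB] := pickP (caseB src dst a b).
  apply: (detailed_balance_at_edge (e := e) (k := 2^-1) inCa inCb).
  - by case/and4P: B => _ /eqP -> _ _; rewrite flip_self.
  - by case/and4P: B => /eqP -> /eqP -> _ _ f fe; rewrite flip_other.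
  - by rewrite (ES_rateB B) inCa mulr1.
  - by rewrite (ES_rateB (caseB_sym B)) inCb mulr1.
have [[x e] C|nC] := pickP (caseC src dst a b).
  apply: (detailed_balance_at_edge (e := e) (k := 4^-1) inCa inCb).
  - by case/and5P: C => _ /eqP -> _ _ _; rewrite flip_self.
  - case/and5P: C => _ /eqP -> _ _ /eqP -> f fe; rewrite flip_other //.
    case open: (a.1 f); first by rewrite delta_cluster_flip_open.
    by rewrite /IPfactor /b2r /= !mulr0n !mulr0 !mul0r.
  - by rewrite (ES_rateC C) inCa inCb !mulr1.
  - by rewrite (ES_rateC (caseC_sym C)) inCa inCb !mulr1.
rewrite !ES_rate_eq0 ?mulr0 // => [e|e|[x e]|e|e|xe]; apply/negP;
by [move/caseA_sym; rewrite nA | move/caseB_sym; rewrite nB | move/caseC_sym; rewrite nC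
   | rewrite nA | rewrite nB | rewrite nC].
Qed.

Lemma ES_rate_C_reversible :
  reversible (fun a : Cstate src dst => IP src dst p (val a)) (ES_rate_C p).
Proof.
move=> a b; rewrite /IP /ES_rate_C mulrAC [RHS]mulrAC.
by rewrite IPweight_detailed_balance ?(valP a) ?(valP b).
Qed.

End Rates.

(** * The edge marginal *)

Section EdgeMarginal.
Variables (R : realType) (V E : finType) (src dst : E -> V) (p : R).
Implicit Types (eta : econf E) (s : sconf V).

Lemma edge_rateE x : edge_rate p x = if x then 1 - p else p.
Proof. by case: x; rewrite /edge_rate /b2r /= ?mulr1 ?mulr0 ?addr0 ?add0r. Qed.

Lemma ES_rate_flip_same eta s e : inC src dst (eta, s) ->
  ES_rate src dst p (eta, s) (flip eta e, s) =
  if gamma src dst eta e then edge_rate p (eta e)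
  else if delta src dst s e then 2^-1 * edge_rate p (eta e) else 0.
Proof.
move=> inCs; have [g|bridge] := ifPn.
  by rewrite (ES_rateA p (e := e)) /caseA /= ?g ?eqxx // inCs mulr1.
have [d|nd] := ifPn.
  by rewrite (ES_rateB p (e := e)) /caseB /= ?bridge ?d ?eqxx // inCs mulr1.
apply: ES_rate_eq0 => [e'|e'|[x e']]; apply/negP => /=.
- by case/and3P => _ /eqP /flip_inj <- g; rewrite g in bridge.
- by case/and4P => _ /eqP /flip_inj <- _ d; rewrite d in nd.
- case/and5P => _ _ _ _ /= /eqP s_cf.
  by have := cluster_flip_neq src dst eta e' x s; rewrite -s_cf eqxx.
Qed.

Lemma ES_rate_flip_cluster eta s e x :
  inC src dst (eta, s) -> incident src dst x e ->
  ES_rate src dst p (eta, s) (flip eta e, cluster_flip src dst eta e x s) =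
  if ~~ gamma src dst eta e && (eta e == delta src dst s e)
  then 4^-1 * edge_rate p (eta e) else 0.
Proof.
move=> inCs xe; have cf_neq := cluster_flip_neq src dst eta e x s.
case: ifPn => [/andP[bridge /eqP ed]|cond].
  rewrite (ES_rateC p (x := x) (e := e)) /caseC /= ?xe ?bridge ?ed ?eqxx //.
  by rewrite inCs inC_cluster_flip // !mulr1.
apply: ES_rate_eq0 => [e'|e'|[x' e']]; apply/negP => /=.
- by case/and3P => /= /eqP s_cf; rewrite s_cf eqxx in cf_neq.
- by case/and4P => /= /eqP s_cf; rewrite s_cf eqxx in cf_neq.
- by case/and5P => _ /= /eqP /flip_inj <- bridge ed _; rewrite bridge ed in cond.
Qed.

Lemma ES_rate_flip_other eta s e s' : s' != s ->
  (forall x, incident src dst x e -> s' != cluster_flip src dst eta e x s) ->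
  ES_rate src dst p (eta, s) (flip eta e, s') = 0.
Proof.
move=> s'_neq not_cf; apply: ES_rate_eq0 => [e'|e'|[x e']]; apply/negP => /=.
- by case/and3P => /= /eqP s_eq; rewrite s_eq eqxx in s'_neq.
- by case/and4P => /= /eqP s_eq; rewrite s_eq eqxx in s'_neq.
- case/and5P => /= xe /eqP /flip_inj ee' _ _ /eqP s_cf; subst e'.
  by have := not_cf x xe; rewrite s_cf eqxx.
Qed.

Lemma ES_rate_flip eta s e b : inC src dst (eta, s) -> b.1 = flip eta e ->
  ES_rate src dst p (eta, s) b =
    (b.2 == s)%:R * ES_rate src dst p (eta, s) (flip eta e, s)
  + ((b.2 == cluster_flip src dst eta e (src e) s)%:R
     + (b.2 == cluster_flip src dst eta e (dst e) s)%:R) *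
    (if ~~ gamma src dst eta e && (eta e == delta src dst s e)
     then 4^-1 * edge_rate p (eta e) else 0).
Proof.
case: b => _ s' inCs /= ->.
have [->|s'_neq] := eqVneq s' s.
  have cf_neq x : (s == cluster_flip src dst eta e x s) = false.
    by apply/negbTE; rewrite eq_sym cluster_flip_neq.
  by rewrite !cf_neq mul1r addr0 mul0r addr0.
rewrite mul0r add0r.
have [->|not_src] := eqVneq s' (cluster_flip src dst eta e (src e) s).
  rewrite ES_rate_flip_cluster ?incident_src //.
  case: ifPn => [/andP[bridge _]|_]; last by rewrite mulr0.
  by rewrite (negPf (cluster_flip_endpoints s bridge)) addr0 mul1r.
have [->|not_dst] := eqVneq s' (cluster_flip src dst eta e (dst e) s).
  by rewrite ES_rate_flip_cluster ?incident_dst // add0r mul1r.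
rewrite add0r mul0r.
by apply: ES_rate_flip_other => // x /incidentP[]->.
Qed.

Lemma sum_fiber_indicator (y : econf E) (s1 : sconf V) (r : R) :
  \sum_(b : Cstate src dst | (val b).1 == y) ((val b).2 == s1)%:R * r =
  if inC src dst (y, s1) then r else 0.
Proof.
case: ifPn => [inC1|notC1].
  rewrite (bigD1 (exist _ (y, s1) inC1)) //= eqxx mul1r big1 ?addr0 //.
  move=> b /andP[/eqP yb b_neq]; case: eqP => [sb|]; last by rewrite mul0r.
  suff b_eq : b = exist _ (y, s1) inC1 by rewrite b_eq eqxx in b_neq.
  by apply: val_inj; rewrite /= -yb -sb -surjective_pairing.
rewrite big1 // => b /eqP yb; case: eqP => [sb|]; last by rewrite mul0r.
by move: notC1; rewrite -yb -sb -surjective_pairing (valP b).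
Qed.

Lemma ES_rate_edge_fiber (a : Cstate src dst) (y : econf E) : y != edge_marg a ->
  \sum_(b | edge_marg b == y) ES_rate_C p a b = FK_rate src dst p (edge_marg a) y.
Proof.
case: a => [[eta s] inCs]; rewrite /edge_marg /ES_rate_C /= => _.
have [e /eqP ->|not_flip] := pickP (fun e => y == flip eta e); last first.
  rewrite /FK_rate; case: pickP => [e|_]; first by rewrite not_flip.
  rewrite big1 // => b /eqP yb; apply: ES_rate_eq0 => [e|e|[x e]]; apply/negP.
  - by case/and3P => _ /=; rewrite yb not_flip.
  - by case/and4P => _ /=; rewrite yb not_flip.
  - by case/and5P => _ /=; rewrite yb not_flip.
have -> : FK_rate src dst p eta (flip eta e) =
    if eta e then 1 - p else if gamma src dst eta e then p else p / 2.
  by rewrite /FK_rate; case: pickP => [e' /eqP /flip_inj <- //|/(_ e)]; rewrite eqxx.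
under eq_bigr => b /eqP b_edges do
  rewrite (ES_rate_flip (b := val b) inCs b_edges) [X in _ + X]mulrDl.
rewrite !big_split /= !sum_fiber_indicator ES_rate_flip_same // !edge_rateE.
have inC_cf x := @inC_cluster_flip _ _ src dst eta s e x inCs.
have [g|bridge] := boolP (gamma src dst eta e).
  by rewrite (inC_flip inCs (gamma_delta inCs g)) /= !if_same !addr0.
have [d|nd] := boolP (delta src dst s e).
  rewrite (inC_flip inCs d) /=.
  case: (eta e) in inC_cf *; rewrite ?eqxx /=; last by rewrite !if_same !addr0 mulrC.
  by rewrite !inC_cf ?incident_src ?incident_dst ?d //; lra.
have eta_e : eta e = false.
  by move/forallP: inCs => /(_ e) /=; rewrite (negPf nd) implybF => /negPf.
rewrite eta_e /= !if_same.
by rewrite !inC_cf ?incident_src ?incident_dst ?eta_e ?(negPf nd) //=; lra.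
Qed.

Lemma ES_rate_edge_stay (a b : Cstate src dst) : b != a ->
  edge_marg b == edge_marg a -> ES_rate_C p a b = 0.
Proof.
rewrite /edge_marg /ES_rate_C => _ /eqP same; have ne e := flip_neq (val a).1 e.
apply: ES_rate_eq0 => [e|e|[x e]]; apply/negP.
- by case/and3P => _ /eqP; rewrite same => /eqP; rewrite eq_sym (negPf (ne e)).
- by case/and4P => _ /eqP; rewrite same => /eqP; rewrite eq_sym (negPf (ne e)).
- by case/and5P => _ /eqP; rewrite same => /eqP; rewrite eq_sym (negPf (ne e)).
Qed.

Lemma edge_marg_FK :
  image_is_MJP_with_rates (ES_rate_C p) (@edge_marg V E src dst) (FK_rate src dst p).
Proof. exact: lumpable_image_is_MJP ES_rate_edge_fiber ES_rate_edge_stay. Qed.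

End EdgeMarginal.

(** * The spin marginal *)

Section SpinMarginal.
Variables (R : realType) (V E : finType) (src dst : E -> V) (p : R) (e0 : E).
Hypotheses (no_loop : forall e, src e != dst e) (p_gt0 : 0 < p) (p_lt1 : p < 1).

Definition all_closed : econf E := [ffun => false].
Definition all_plus : sconf V := [ffun => true].
Definition only_e0 : econf E := flip all_closed e0.
Definition flipped_src : sconf V := cluster_flip src dst only_e0 e0 (src e0) all_plus.

Lemma delta_all_plus e : delta src dst all_plus e.
Proof. by rewrite /delta !ffunE. Qed.

Lemma inC_all_closed : inC src dst (all_closed, all_plus).
Proof. by apply/forallP => f; rewrite /= ffunE. Qed.

Lemma inC_only_e0 : inC src dst (only_e0, all_plus).
Proof. by apply/forallP => f; rewrite /= delta_all_plus implybT. Qed.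

Lemma only_e0_bridge : ~~ gamma src dst only_e0 e0.
Proof.
have no_adj u v : ~~ open_adj src dst only_e0 e0 u v.
  by apply/existsP => -[f /and3P[fe]]; rewrite flip_other // ffunE.
apply: contra (no_loop e0) => /connectP[[|w q] /= pth ->] //.
by rewrite (negPf (no_adj _ _)) in pth.
Qed.

Let a_closed : Cstate src dst := exist _ (all_closed, all_plus) inC_all_closed.
Let a_e0 : Cstate src dst := exist _ (only_e0, all_plus) inC_only_e0.

Lemma ES_rate_spin_fiber_lt :
  \sum_(b | spin_marg b == flipped_src) ES_rate_C p a_closed b <
  \sum_(b | spin_marg b == flipped_src) ES_rate_C p a_e0 b.
Proof.
have flipped_neq : flipped_src != all_plus := cluster_flip_neq _ _ _ _ _ _.
rewrite big1 => [|b /eqP spin_b]; last first.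
  apply: ES_rate_eq0 => [e|e|[x e]]; apply/negP.
  - by case/and3P => /eqP spin_eq; rewrite -spin_b /spin_marg spin_eq eqxx in flipped_neq.
  - by case/and4P => /eqP spin_eq; rewrite -spin_b /spin_marg spin_eq eqxx in flipped_neq.
  - by case/and5P => _ _ _ /=; rewrite ffunE delta_all_plus.
have inC_target : inC src dst (flip only_e0 e0, flipped_src).
  rewrite inC_cluster_flip ?inC_only_e0 ?incident_src ?only_e0_bridge //.
  by rewrite flip_self ffunE delta_all_plus.
pose target : Cstate src dst := exist _ (flip only_e0 e0, flipped_src) inC_target.
have rate_gt0 : 0 < ES_rate_C p a_e0 target.
  rewrite /ES_rate_C ES_rate_flip_cluster ?inC_only_e0 ?incident_src //.
  rewrite only_e0_bridge flip_self ffunE delta_all_plus edge_rateE /=.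
  by rewrite mulr_gt0 ?invr_gt0 ?subr_gt0.
apply: (lt_le_trans rate_gt0); rewrite (bigD1 target) //= lerDl.
by apply: sumr_ge0 => b _; apply: ES_rate_ge0.
Qed.

Lemma spin_marg_not_MJP : ~ image_is_MJP (ES_rate_C p) (@spin_marg V E src dst).
Proof.
apply: (not_image_MJP_fiber_rates (a1 := a_closed) (a2 := a_e0) (y := flipped_src)) => //.
- exact: cluster_flip_neq.
- exact: ES_rate_spin_fiber_lt.
Qed.

End SpinMarginal.

Theorem theorem5 (R : realType) (V E : finType) (src dst : E -> V)
  (no_loop : forall e, src e != dst e)
  (simple : forall e f, [set src e; dst e] = [set src f; dst f] -> e = f)
  (E_nonempty : (0 < #|E|)%N)
  (p : R) (p_gt0 : 0 < p) (p_lt1 : p < 1) :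
  reversible (fun a : Cstate src dst => IP src dst p (val a)) (@ES_rate_C R V E src dst p)
  /\ image_is_MJP_with_rates (@ES_rate_C R V E src dst p) (@edge_marg V E src dst)
       (FK_rate src dst p)
  /\ ~ image_is_MJP (@ES_rate_C R V E src dst p) (@spin_marg V E src dst).
Proof.
split; first exact: ES_rate_C_reversible.
split; first exact: edge_marg_FK.
have [e0 _] := card_gt0P E_nonempty.
exact: spin_marg_not_MJP e0 no_loop p_gt0 p_lt1.
Qed.
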